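(* Let $p,q$ be integers with $p\ge2$ and $0<q<p$, and let $D=D(g,f)$ be the recursive matrix with $g(x)=(1-p^2x)^{-q/p}$ and $f(x)=\dfrac{-x}{1-p^2x}$. Then for all integers $n\ge0$ and $m\ge0$, \[ D_{n,-m}=Q(p,q)_{n,m}=\frac{p^{2(n+m)}\,(q/p)_n\,\bigl((p-q)/p\bigr)_m}{(n+m)!}. \] That is, the matrix of $(p,q)$-super Patalan numbers forms the lower left quadrant ($n\ge0$, $k=-m\le0$) of $D$, with the column order reversed.
   Context: For power series $g(x)=\sum_{k\ge0}g_kx^k$ and $f(x)=\sum_{k\ge0}f_kx^k$ with $f_0=0$ and $f_1\ne0$, the recursive matrix $D(g,f)$ is the doubly infinite matrix with entries $D_{n,k}=[x^n]\bigl(g(x)f(x)^k\bigr)$ for all integers $n,k$, where for $k<0$, $f(x)^k$ denotes the multiplicative inverse of $f(x)^{-k}$ in the ring of formal Laurent series. The $(p,q)$-super Patalan numbers are $Q(p,q)_{n,m}=\frac{p^{2(n+m)}(q/p)_n((p-q)/p)_m}{(n+m)!}$ for $n,m\ge0$, where $(\alpha)_r=\alpha(\alpha+1)\cdots(\alpha+r-1)$ is the rising factorial with $(\alpha)_0=1$ (for $p=2,q=1$ these are the super Catalan numbers $\frac{(2n)!(2m)!}{n!\,m!\,(n+m)!}$). *)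

From HB Require Import structures.
From mathcomp Require Import all_boot all_order all_algebra.
Set Implicit Arguments. Unset Strict Implicit. Unset Printing Implicit Defensive.
Import Order.TTheory GRing.Theory Num.Theory.
Local Open Scope ring_scope.

Section PS.
Variable F : fieldType.

Definition ps := nat -> F.

Definition ps1 : ps := fun n => if n == 0%N then 1 else 0.
Definition psX : ps := fun n => if n == 1%N then 1 else 0.
Definition psadd (a b : ps) : ps := fun n => a n + b n.
Definition psscale (c : F) (a : ps) : ps := fun n => c * a n.
Definition psmul (a b : ps) : ps :=
  fun n => \sum_(i < n.+1) a i * b (n - i)%N.

(* Multiplicative inverse of a power series with a 0 <> 0:
   b_0 = 1/a_0,  b_n = -(1/a_0) * sum_{j=1}^n a_j b_{n-j}. *)
Fixpoint psinv_seq (a : ps) (n : nat) : seq F :=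
  match n with
  | 0 => [:: (a 0%N)^-1]
  | n'.+1 =>
      let s := psinv_seq a n' in
      rcons s (- (a 0%N)^-1 * \sum_(i < n'.+1) a i.+1 * nth 0 s (n' - i)%N)
  end.
Definition psinv (a : ps) : ps := fun n => nth 0 (psinv_seq a n) n.

(* Formal Laurent series  x^(lv L) * (lc L)(x),  lc L a power series. *)
Record laurent := Laurent { lv : int; lc : ps }.

Definition lcoef (L : laurent) (n : int) : F :=
  match (n - lv L)%R with
  | Posz i => lc L i
  | Negz _ => 0
  end.

Definition lone : laurent := Laurent 0 ps1.
Definition lmul (A B : laurent) : laurent :=
  Laurent (lv A + lv B) (psmul (lc A) (lc B)).
Definition lpow (L : laurent) (m : nat) : laurent := iter m (lmul L) lone.
(* multiplicative inverse in the field of Laurent series, valid when the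
   leading coefficient (lc L 0) is nonzero *)
Definition linv (L : laurent) : laurent := Laurent (- lv L) (psinv (lc L)).

Definition lps (a : ps) : laurent := Laurent 0 a.
(* A power series f with f_0 = 0, written as x * (f(x)/x); this is the same
   Laurent series as lps f when f_0 = 0, but with nonzero leading coefficient
   f_1, so that linv applies to its powers. *)
Definition lps_f (f : ps) : laurent := Laurent 1 (fun i => f i.+1).

Definition lpowz (f : ps) (k : int) : laurent :=
  match k with
  | Posz m => lpow (lps_f f) m
  | Negz m => linv (lpow (lps_f f) m.+1)
  end.

(* Recursive matrix D(g,f):  D_{n,k} = [x^n] (g(x) f(x)^k),  n, k integers.
   (Meaningful under f_0 = 0, f_1 <> 0.) *)
Definition rmat (g f : ps) (n k : int) : F := lcoef (lmul (lps g) (lpowz f k)) n.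

Definition gbinom (a : F) (k : nat) : F :=
  (\prod_(i < k) (a - i%:R)) / (k`!)%:R.

(* (1 + c x)^a := sum_k binom(a,k) c^k x^k  (binomial series) *)
Definition binser (c a : F) : ps := fun k => gbinom a k * c ^+ k.

Definition rising (a : F) (r : nat) : F := \prod_(i < r) (a + i%:R).

End PS.

Definition superPatalan (p q : nat) (n m : nat) : rat :=
  (p%:R) ^+ (2 * (n + m)) * rising (q%:R / p%:R) n
    * rising ((p%:R - q%:R) / p%:R) m / ((n + m)`!)%:R.

Definition gPat (p q : nat) : ps rat := binser (- (p%:R ^+ 2)) (- (q%:R / p%:R)).
Definition fPat (p : nat) : ps rat :=
  psmul (psscale (-1) (psX rat)) (psinv (psadd (ps1 rat) (psscale (- (p%:R ^+ 2)) (psX rat)))).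

From HB Require Import structures.
From mathcomp Require Import all_boot all_order all_algebra.
From mathcomp Require Import zify ring.
From Stdlib Require Import FunctionalExtensionality.
Set Implicit Arguments. Unset Strict Implicit.
Import Order.TTheory GRing.Theory Num.Theory.
Local Open Scope ring_scope.

(* Writing f(x) = -x/(1 - c x) with c = p^2, the Laurent series f^(-m) is
   x^(-m) u^m with u = (f/x)^(-1) = -1 + c x.  Hence D_{n,-m} is the
   coefficient of x^(n+m) in H_m := g u^m, and multiplying by u gives
   H_(m+1)(k+1) = c H_m(k) - H_m(k+1).  The super Patalan numbers satisfy
   the same recurrence Q_{n,m+1} = p^2 Q_{n,m} - Q_{n+1,m}, and the
   binomial series g gives the boundary column H_0(n) = g_n = Q_{n,0}. *)

Section PowerSeries.
Variable F : fieldType.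
Implicit Types a b d : ps F.

Definition ps_trunc a N : {poly F} := \poly_(i < N) a i.

Lemma psmul_trunc a b n N : (n < N)%N -> psmul a b n = (ps_trunc a N * ps_trunc b N)`_n.
Proof.
move=> ltnN; rewrite coefM; apply: eq_bigr => i _; rewrite !coef_poly.
have ltiN : (i < N)%N by have := ltn_ord i; lia.
have ltniN : (n - i < N)%N by lia.
by rewrite ltiN ltniN.
Qed.

Lemma psmulC a b : psmul a b = psmul b a.
Proof.
apply: functional_extensionality => n.
by rewrite !(psmul_trunc _ _ (ltnSn n)) mulrC.
Qed.

Lemma psmulA a b d : psmul a (psmul b d) = psmul (psmul a b) d.
Proof.
apply: functional_extensionality => n.
have -> : psmul a (psmul b d) n = (ps_trunc a n.+1 * (ps_trunc b n.+1 * ps_trunc d n.+1))`_n.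
  rewrite coefM; apply: eq_bigr => i _.
  by rewrite (@psmul_trunc b d (n - i) n.+1) ?coef_poly ?ltn_ord //; lia.
have -> : psmul (psmul a b) d n = (ps_trunc a n.+1 * ps_trunc b n.+1 * ps_trunc d n.+1)`_n.
  rewrite coefM; apply: eq_bigr => i _.
  rewrite (@psmul_trunc a b i n.+1 (ltn_ord i)) [in RHS]coef_poly.
  by rewrite (_ : (n - i < n.+1)%N = true) //; lia.
by rewrite mulrA.
Qed.

Lemma psmul1l b : psmul (ps1 F) b = b.
Proof.
apply: functional_extensionality => n.
rewrite /psmul big_ord_recl /= big1 ?addr0 ?mul1r ?subn0 // => i _.
by rewrite /ps1 /= mul0r.
Qed.

Lemma psmul1r a : psmul a (ps1 F) = a.
Proof. by rewrite psmulC psmul1l. Qed.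

Lemma psmul_linearS a b k : (forall i, (1 < i)%N -> a i = 0) ->
  psmul a b k.+1 = a 0%N * b k.+1 + a 1%N * b k.
Proof.
move=> a_lin; rewrite /psmul big_ord_recl big_ord_recl big1 => [|i _].
  by rewrite addr0 subn0 /bump /= subSS subn0.
by rewrite a_lin ?mul0r.
Qed.

Lemma size_psinv_seq a n : size (psinv_seq a n) = n.+1.
Proof. by elim: n => //= n IH; rewrite size_rcons IH. Qed.

Lemma nth_psinv_seq a n i : (i <= n)%N -> nth 0 (psinv_seq a n) i = psinv a i.
Proof.
elim: n i => [|n IH] i lein; first by have -> : i = 0%N by lia.
have [->|neqin] := eqVneq i n.+1; first by [].
rewrite [psinv_seq _ _]/= nth_rcons size_psinv_seq.
by rewrite (_ : (i < n.+1)%N = true) ?IH //; lia.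
Qed.

Lemma psinvS a n :
  psinv a n.+1 = - (a 0%N)^-1 * \sum_(i < n.+1) a i.+1 * psinv a (n - i)%N.
Proof.
rewrite {1}/psinv [psinv_seq _ _]/= nth_rcons size_psinv_seq ltnn eqxx.
by congr (_ * _); apply: eq_bigr => i _; rewrite nth_psinv_seq // leq_subr.
Qed.

Lemma psinv_unique a b : psmul a b = ps1 F -> psinv a = b.
Proof.
move=> ab1.
have a0b0 : a 0%N * b 0%N = 1.
  by have := congr1 (fun s => s 0%N) ab1; rewrite /psmul big_ord1.
have a0_neq0 : a 0%N != 0.
  by apply: contra_eq_neq a0b0 => ->; rewrite mul0r eq_sym oner_neq0.
apply: functional_extensionality => n; apply/esym.
elim/ltn_ind: n => -[|n] IH; first by rewrite /psinv /= -[b 0%N](mulKf a0_neq0) a0b0 mulr1.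
have := congr1 (fun s => s n.+1) ab1.
rewrite /psmul big_ord_recl /= subn0 => /eqP; rewrite addr_eq0 => /eqP abS.
rewrite psinvS.
have -> : \sum_(i < n.+1) a i.+1 * psinv a (n - i)%N = - (a 0%N * b n.+1).
  rewrite abS opprK; apply: eq_bigr => i _.
  by rewrite -IH ?ltnS ?leq_subr // /bump /= add1n subSS.
by rewrite mulrN mulNr opprK mulKf.
Qed.

Lemma lcoefE (L : laurent F) (n : int) k : n - lv L = Posz k -> lcoef L n = lc L k.
Proof. by rewrite /lcoef => ->. Qed.

Lemma lv_lpow (L : laurent F) m : lv L = 1 -> lv (lpow L m) = m%:Z.
Proof.
move=> lvL1; elim: m => [|m IH] //.
by rewrite /lpow iterS /= -/(lpow L m) IH lvL1 -PoszD.
Qed.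

End PowerSeries.

Section RecursiveMatrixNegative.
Variables (F : fieldType) (c : F).

Definition ps_lin (a0 a1 : F) : ps F :=
  fun k => if k == 0%N then a0 else if k == 1%N then a1 else 0.

Lemma ps_lin_sparse a0 a1 i : (1 < i)%N -> ps_lin a0 a1 i = 0.
Proof. by case: i => [|[|i]]. Qed.

Lemma psmul_linS a0 a1 b k : psmul (ps_lin a0 a1) b k.+1 = a0 * b k.+1 + a1 * b k.
Proof. by rewrite psmul_linearS //; apply: ps_lin_sparse. Qed.

Let geom_den := psadd (ps1 F) (psscale (- c) (psX F)).
Let f := psmul (psscale (-1) (psX F)) (psinv geom_den).
Let u := ps_lin (-1) c.
Let upow m := iter m (psmul u) (ps1 F).

Lemma psinv_geom : psinv geom_den = fun k => c ^+ k.
Proof.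
have -> : geom_den = ps_lin 1 (- c).
  apply: functional_extensionality => -[|[|k]];
    by rewrite /geom_den /psadd /psscale /ps1 /psX /= ?mulr0 ?mulr1 ?addr0 ?add0r.
apply: psinv_unique; apply: functional_extensionality => -[|k].
  by rewrite /psmul big_ord1 /= mulr1.
by rewrite psmul_linS /ps1 /= exprS; ring.
Qed.

Lemma geom_fS k : f k.+1 = - c ^+ k.
Proof.
rewrite /f psinv_geom psmul_linearS => [|i lt1i]; last first.
  by rewrite /psscale /psX; case: i lt1i => [|[|i]] //= _; rewrite mulr0.
by rewrite /psscale /psX /=; ring.
Qed.

Lemma geom_f_div_x_inv : psmul u (fun i => f i.+1) = ps1 F.
Proof.
apply: functional_extensionality => -[|k].
  by rewrite /psmul big_ord1 geom_fS /u /ps_lin /ps1 /= expr0; ring.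
by rewrite psmul_linS !geom_fS /ps1 /= exprS; ring.
Qed.

Lemma lpow_geom_f_inv m : psmul (lc (lpow (lps_f f) m)) (upow m) = ps1 F.
Proof.
elim: m => [|m IH]; first exact: psmul1l.
rewrite [lc _]/= [upow _]/= -/(lpow _ m) -/(upow m).
rewrite -psmulA (psmulA _ u) (psmulC _ u) -psmulA IH psmul1r.
by rewrite psmulC geom_f_div_x_inv.
Qed.

Lemma rmat_geom_neg (g : ps F) n m :
  rmat g f (n%:Z) (- (m%:Z)) = psmul g (upow m) (n + m)%N.
Proof.
case: m => [|m].
  by rewrite /rmat (@lcoefE _ _ _ n) ?addn0 //= subr0.
rewrite /rmat (@lcoefE _ _ _ (n + m.+1)%N).
  by rewrite [lc _]/= (psinv_unique (lpow_geom_f_inv m.+1)).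
by rewrite /= lv_lpow // sub0r opprK; lia.
Qed.

Lemma psmul_upowS (g : ps F) m k :
  psmul g (upow m.+1) k.+1
  = c * psmul g (upow m) k - psmul g (upow m) k.+1.
Proof.
have -> : psmul g (upow m.+1) = psmul u (psmul g (upow m)).
  by rewrite [upow _]/= psmulA (psmulC g u) -psmulA.
by rewrite psmul_linS; ring.
Qed.

End RecursiveMatrixNegative.

Section SuperPatalan.
Variables p q : nat.
Hypothesis p_gt0 : (0 < p)%N.
Let P : rat := p%:R.

Lemma risingS (x : rat) k : rising x k.+1 = rising x k * (x + k%:R).
Proof. by rewrite /rising big_ord_recr. Qed.

Lemma superPatalanS n m : superPatalan p q n m.+1 =
  P ^+ 2 * superPatalan p q n m - superPatalan p q n.+1 m.
Proof.
rewrite /superPatalan addnS addSn !risingS factS natrM mulnS exprD -/P.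
have nmS : (n + m).+1%:R = n%:R + m%:R + 1 :> rat by rewrite -natrD -addn1 natrD.
have fact_neq0 : ((n + m)`!)%:R != 0 :> rat by rewrite pnatr_eq0 -lt0n fact_gt0.
have nmS_neq0 : n%:R + m%:R + 1 != 0 :> rat by rewrite -nmS pnatr_eq0.
have P_neq0 : P != 0 by rewrite pnatr_eq0 -lt0n.
by rewrite nmS; field; rewrite P_neq0 fact_neq0 nmS_neq0.
Qed.

Lemma gbinom_neg_rising (x c : rat) k :
  gbinom (- x) k * (- c) ^+ k = c ^+ k * rising x k / (k`!)%:R.
Proof.
rewrite /gbinom /rising mulrAC; congr (_ * _).
elim: k => [|k IH]; first by rewrite !big_ord0 !expr0.
rewrite !big_ord_recr /= !exprSr.
transitivity ((\prod_(i < k) (- x - i%:R) * (- c) ^+ k) * ((- x - k%:R) * - c)).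
  by ring.
by rewrite IH; ring.
Qed.

Lemma gPat_superPatalan n : gPat p q n = superPatalan p q n 0.
Proof.
by rewrite /gPat /binser gbinom_neg_rising /superPatalan addn0 /rising big_ord0 exprM mulr1.
Qed.

End SuperPatalan.

Theorem theorem4 (p q : nat) (hp : (2 <= p)%N) (hq0 : (0 < q)%N) (hqp : (q < p)%N)
  (n m : nat) :
  rmat (gPat p q) (fPat p) (n%:Z) (- (m%:Z)) = superPatalan p q n m.
Proof.
have p_gt0 : (0 < p)%N by apply: leq_trans hp.
rewrite [fPat p]/fPat rmat_geom_neg.
elim: m n => [|m IH] n.
  by rewrite addn0 /= psmul1r gPat_superPatalan.
by rewrite addnS psmul_upowS -addSn !IH superPatalanS.
Qed.
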